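(* Let $V$ be a real vector space with an inner product of signature $(p,q)$ where $p\ge q\ge2$. (1) If $p=q$, then there exists an algebraic curvature tensor $R$ on $V$ which has spacelike rank $4$ and timelike rank $4$, and which does not have constant mixed rank. (2) If $p>q$, then there exists an algebraic curvature tensor $R$ on $V$ which has spacelike rank $4$, and which does not have constant timelike rank and does not have mixed rank $4$.
   Context: An inner product of signature $(p,q)$ is a non-degenerate symmetric bilinear form $(\cdot,\cdot)$ whose maximal negative definite subspaces have dimension $p$ and maximal positive definite subspaces dimension $q$. A $2$-plane $\pi$ is spacelike (resp. timelike, mixed) if the induced form on $\pi$ has signature $(0,2)$ (resp. $(2,0)$, $(1,1)$). An algebraic curvature tensor is $R\in\otimes^4V^*$ with $R(x,y,z,w)=R(z,w,x,y)=-R(y,x,z,w)$ and $R(x,y,z,w)+R(y,z,x,w)+R(z,x,y,w)=0$; the operator $R(x,y)$ is defined by $R(x,y,z,w)=(R(x,y)z,w)$. For a non-degenerate $2$-plane $\pi$ with oriented basis $\{e_1,e_2\}$, $R(\pi):=|(e_1,e_1)(e_2,e_2)-(e_1,e_2)^2|^{-1/2}R(e_1,e_2)$. $R$ has spacelike rank $r$ if $\operatorname{rank}R(\pi)=r$ for every oriented spacelike $2$-plane $\pi$; timelike and mixed rank $r$ are defined analogously. Constant timelike (mixed) rank means timelike (mixed) rank $r$ for some $r$. *)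

(* V = 'rV[R]_n over R : realType, inner product given by a
   symmetric matrix G : (x,y) = x *m G *m y^T. *)
From mathcomp Require Import all_boot all_order all_algebra.
From mathcomp Require Import reals.
Set Implicit Arguments. Unset Strict Implicit. Unset Printing Implicit Defensive.
Import Order.TTheory GRing.Theory Num.Theory.
Local Open Scope ring_scope.

Section Defs.
Variable R : realType.

Definition form m (G : 'M[R]_m) (x y : 'rV[R]_m) : R := (x *m G *m y^T) 0 0.

Definition negdef_sub m (G : 'M[R]_m) (U : 'M[R]_m) : Prop :=
  forall v : 'rV[R]_m, (v <= U)%MS -> v != 0 -> form G v v < 0.
Definition posdef_sub m (G : 'M[R]_m) (U : 'M[R]_m) : Prop :=
  forall v : 'rV[R]_m, (v <= U)%MS -> v != 0 -> 0 < form G v v.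

Definition inner_product_sig m (G : 'M[R]_m) (p q : nat) : Prop :=
  [/\ G^T = G, G \in unitmx,
      (exists U, negdef_sub G U /\ \rank U = p) /\
        (forall U, negdef_sub G U -> (\rank U <= p)%N)
    & (exists U, posdef_sub G U /\ \rank U = q) /\
        (forall U, posdef_sub G U -> (\rank U <= q)%N)].

(* elements of (x)^4 V^*, given by their coefficients *)
Definition tensor4 (n : nat) := 'I_n -> 'I_n -> 'I_n -> 'I_n -> R.

Definition tev n (T : tensor4 n) (x y z w : 'rV[R]_n) : R :=
  \sum_(i < n) \sum_(j < n) \sum_(k < n) \sum_(l < n)
     T i j k l * x 0 i * y 0 j * z 0 k * w 0 l.

Definition is_act n (T : tensor4 n) : Prop :=
  forall x y z w : 'rV[R]_n,
    [/\ tev T x y z w = tev T z w x y,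
        tev T x y z w = - tev T y x z w
      & tev T x y z w + tev T y z x w + tev T z x y w = 0].

(* matrix of the operator R(x,y) acting on row vectors: z *m curv_op = R(x,y)z,
   characterised by (R(x,y)z, w) = R(x,y,z,w) *)
Definition curv_op n (G : 'M[R]_n) (T : tensor4 n) (x y : 'rV[R]_n) : 'M[R]_n :=
  (\matrix_(k < n, l < n) tev T x y (delta_mx 0 k) (delta_mx 0 l)) *m invmx G.

Definition plane_op n (G : 'M[R]_n) (T : tensor4 n) (e1 e2 : 'rV[R]_n) : 'M[R]_n :=
  (Num.sqrt `|form G e1 e1 * form G e2 e2 - form G e1 e2 ^+ 2|)^-1
    *: curv_op G T e1 e2.

Definition gram2 n (G : 'M[R]_n) (e1 e2 : 'rV[R]_n) : 'M[R]_2 :=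
  \matrix_(i < 2, j < 2)
     form G (if i == 0 :> nat then e1 else e2) (if j == 0 :> nat then e1 else e2).

Definition plane_sig n (G : 'M[R]_n) (a b : nat) (e1 e2 : 'rV[R]_n) : Prop :=
  \rank (col_mx e1 e2) = 2%N /\ inner_product_sig (gram2 G e1 e2) a b.

Definition spacelike n (G : 'M[R]_n) := plane_sig G 0 2.
Definition timelike n (G : 'M[R]_n) := plane_sig G 2 0.
Definition mixed n (G : 'M[R]_n) := plane_sig G 1 1.

Definition has_rank_on n (kind : 'rV[R]_n -> 'rV[R]_n -> Prop)
  (G : 'M[R]_n) (T : tensor4 n) (r : nat) : Prop :=
  forall e1 e2, kind e1 e2 -> \rank (plane_op G T e1 e2) = r.

Definition spacelike_rank n (G : 'M[R]_n) T r := has_rank_on (spacelike G) G T r.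
Definition timelike_rank n (G : 'M[R]_n) T r := has_rank_on (timelike G) G T r.
Definition mixed_rank n (G : 'M[R]_n) T r := has_rank_on (mixed G) G T r.
Definition const_timelike_rank n (G : 'M[R]_n) T := exists r, timelike_rank G T r.
Definition const_mixed_rank n (G : 'M[R]_n) T := exists r, mixed_rank G T r.

End Defs.

(* Choose a pseudo-orthonormal basis f_0, ..., f_(p-1) (timelike) and g_0, ...,
   g_(q-1) (spacelike), and let psi be the self-adjoint map with psi g_k = f_k
   and psi f_k = - g_k for k < q, and psi f_i = 0 for i >= q.  The example is
   R = R_id + R_psi, where R_A(x,y,z,w) = (Ay,z)(Ax,w) - (Ax,z)(Ay,w) is an
   algebraic curvature tensor for every self-adjoint A.

   The image of R(x,y) is spanned by x, y, psi x, psi y, so R(pi) has rank 4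
   exactly when u + psi w = 0 with u, w in pi forces u = w = 0.  For such u, w
   one computes (u,u) + (w,w) = - sum_(i >= q) (w,f_i)^2 <= 0.  This rules out
   nontrivial solutions on spacelike planes, and on timelike planes orthogonal
   to f_q, ..., f_(p-1), i.e. on all timelike planes when p = q.  On the other
   hand u = g_0, w = f_0 is a solution on the mixed plane span(f_0, g_0), and
   u = 0, w = f_q on every plane through f_q, while span(f_0, g_1) and
   span(f_0, f_1) have rank 4. *)
From Pilot Require Import Defs.
From mathcomp Require Import all_boot all_order all_algebra.
From mathcomp Require Import reals.
From mathcomp Require Import ring lra.
From Stdlib Require Import Classical.
Set Implicit Arguments. Unset Strict Implicit. Unset Printing Implicit Defensive.
Import Order.TTheory GRing.Theory Num.Theory.
Local Open Scope ring_scope.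

Section BilinearForm.
Variables (R : realType) (n : nat) (G : 'M[R]_n).
Local Notation fm := (Defs.form G).

Lemma formDl x y z : fm (x + y) z = fm x z + fm y z.
Proof. by rewrite /Defs.form !mulmxDl mxE. Qed.

Lemma formZl a x z : fm (a *: x) z = a * fm x z.
Proof. by rewrite /Defs.form -!scalemxAl mxE. Qed.

Lemma formDr x y z : fm z (x + y) = fm z x + fm z y.
Proof. by rewrite /Defs.form linearD /= mulmxDr mxE. Qed.

Lemma formZr a x z : fm z (a *: x) = a * fm z x.
Proof. by rewrite /Defs.form linearZ /= -scalemxAr mxE. Qed.

Lemma form0l z : fm 0 z = 0.
Proof. by rewrite -(scale0r 0) formZl mul0r. Qed.

Lemma formNl x z : fm (- x) z = - fm x z.
Proof. by rewrite -scaleN1r formZl mulN1r. Qed.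

Lemma formBl x y z : fm (x - y) z = fm x z - fm y z.
Proof. by rewrite formDl formNl. Qed.

Lemma formBr x y z : fm z (x - y) = fm z x - fm z y.
Proof. by rewrite formDr -scaleN1r formZr mulN1r. Qed.

Lemma form_suml I (s : seq I) (P : pred I) F z :
  fm (\sum_(i <- s | P i) F i) z = \sum_(i <- s | P i) fm (F i) z.
Proof. by apply: (big_morph (fm^~ z)); [move=> x y; exact: formDl | exact: form0l]. Qed.

Lemma form_delta v j : fm v (delta_mx 0 j) = (v *m G) 0 j.
Proof. by rewrite /Defs.form trmx_delta -colE mxE. Qed.

Lemma formE x y : fm x y = \sum_i \sum_j x 0 i * G i j * y 0 j.
Proof.
rewrite /Defs.form mxE exchange_big; apply: eq_bigr => j _.
by rewrite !mxE mulr_suml; apply: eq_bigr => i _.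
Qed.

Lemma sub_kermx_form x v : (x <= kermx (G *m v^T))%MS = (fm x v == 0).
Proof.
rewrite sub_kermx mulmxA; apply/eqP/eqP => xv0; first by rewrite /Defs.form xv0 mxE.
by apply/matrixP => i j; rewrite !ord1 [RHS]mxE.
Qed.

Lemma form_opp x y : Defs.form (- G) x y = - fm x y.
Proof. by rewrite /Defs.form mulmxN mulNmx mxE. Qed.

Lemma form_outer (a b x z : 'rV[R]_n) :
  Defs.form (G *m a^T *m b *m G) x z = fm x a * fm b z.
Proof.
rewrite /Defs.form !mulmxA.
have -> : x *m G *m a^T *m b *m G *m z^T = (x *m G *m a^T) *m (b *m G *m z^T).
  by rewrite !mulmxA.
by rewrite mxE big_ord1.
Qed.

Definition rows_of (h : seq 'rV[R]_n) : 'M[R]_(size h, n) := \matrix_(i < size h) h`_i.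

Lemma rows_of_mul h (D : 'rV[R]_(size h)) : D *m rows_of h = \sum_i D 0 i *: h`_i.
Proof. by rewrite mulmx_sum_row; apply: eq_bigr => i _; rewrite rowK. Qed.

Lemma form_rows_of v h i : (v *m (G *m (rows_of h)^T)) 0 i = fm v h`_i.
Proof. by rewrite mulmxA /Defs.form !mxE; apply: eq_bigr => j _; rewrite !mxE. Qed.

Lemma negdef_oppE U : negdef_sub (- G) U <-> posdef_sub G U.
Proof.
by split=> defU v vU vn0; move: (defU v vU vn0); rewrite form_opp ?oppr_lt0 ?oppr_gt0.
Qed.

End BilinearForm.

(** * Pseudo-orthonormal bases and Sylvester's law of inertia *)

Section SymmetricForm.
Variables (R : realType) (n : nat) (G : 'M[R]_n).
Hypothesis Gsym : G^T = G.
Local Notation fm := (Defs.form G).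

Lemma formC x y : fm x y = fm y x.
Proof.
rewrite /Defs.form -[in LHS](trmxK (x *m G *m y^T)) mxE.
by rewrite !trmx_mul trmxK Gsym mulmxA.
Qed.

Lemma form_polarization (W : 'M[R]_n) :
  (forall u, (u <= W)%MS -> fm u u = 0) ->
  forall x w, (x <= W)%MS -> (w <= W)%MS -> fm x w = 0.
Proof.
move=> iso x w xW wW; have := iso (x + w) (addmx_sub xW wW).
rewrite formDl !formDr iso // iso // (formC w x) add0r addr0 => /eqP.
by rewrite -mulr2n mulrn_eq0 => /eqP.
Qed.

Definition proj_perp (v x : 'rV[R]_n) := x - (fm x v * fm v v) *: v.

Section Projection.
Variable v : 'rV[R]_n.
Hypothesis v_unit : fm v v ^+ 2 = 1.

Lemma form_proj_perp x : fm (proj_perp v x) v = 0.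
Proof. by rewrite formBl formZl -mulrA -expr2 v_unit mulr1 subrr. Qed.

Lemma form_proj_perp_split x w :
  fm x w = fm v v * (fm x v * fm v w) + fm (proj_perp v x) (proj_perp v w).
Proof.
rewrite !(formBl, formBr, formZl, formZr) (formC w v).
have -> : fm v w * fm v v * fm v v = fm v w by rewrite -mulrA -expr2 v_unit mulr1.
ring.
Qed.

End Projection.

Definition orthonormal_basis_of (W : 'M[R]_n) (s : seq 'rV[R]_n) : Prop :=
  [/\ uniq s, {in s, forall t, (t <= W)%MS /\ fm t t ^+ 2 = 1},
      {in s &, forall x y, x != y -> fm x y = 0}
    & forall x w, (x <= W)%MS -> (w <= W)%MS ->
        fm x w = \sum_(t <- s) fm t t * (fm x t * fm t w)].

Lemma orthonormal_basis_of_isotropic (W : 'M[R]_n) :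
  (forall u, (u <= W)%MS -> fm u u = 0) -> orthonormal_basis_of W [::].
Proof. by move=> iso; split=> // x w xW wW; rewrite big_nil (form_polarization iso). Qed.

Lemma orthonormal_basis_of_cons (W : 'M[R]_n) v s : fm v v ^+ 2 = 1 -> (v <= W)%MS ->
  orthonormal_basis_of (W :&: kermx (G *m v^T))%MS s -> orthonormal_basis_of W (v :: s).
Proof.
move=> vv vW [us sW' orth expand].
have inW' x : (x <= W :&: kermx (G *m v^T))%MS = (x <= W)%MS && (fm x v == 0).
  by rewrite sub_capmx sub_kermx_form.
have sv t : t \in s -> fm t v = 0 by case/sW' => + _; rewrite inW' => /andP[_ /eqP].
have vv0 : fm v v != 0 by apply: contra_eq_neq vv => ->; rewrite expr0n eq_sym oner_eq0.
split.
- by rewrite /= us andbT; apply: contraNN vv0 => /sv ->.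
- move=> t; rewrite inE => /predU1P[-> // | /sW'[tW' tt]].
  by split=> //; apply: submx_trans tW' (capmxSl _ _).
- move=> x y; rewrite !inE => /predU1P[-> | xs] /predU1P[-> | ys]; rewrite ?eqxx //.
  + by move=> _; rewrite formC sv.
  + by move=> _; rewrite sv.
  + exact: orth.
- move=> x w xW wW; rewrite big_cons (form_proj_perp_split vv x w).
  have proj_sub u : (u <= W)%MS -> (proj_perp v u <= W :&: kermx (G *m v^T))%MS.
    move=> uW; rewrite inW' form_proj_perp // eqxx andbT.
    by rewrite addmx_sub // eqmx_opp scalemx_sub.
  rewrite (expand (proj_perp v x)) ?proj_sub //; congr (_ + _).
  apply: eq_big_seq => t ts.
  by rewrite /proj_perp formBl formBr !formZl !formZr (formC v t) (sv t ts) !mulr0 !subr0.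
Qed.

Lemma form_normalize v : fm v v != 0 ->
  fm ((Num.sqrt `|fm v v|)^-1 *: v) ((Num.sqrt `|fm v v|)^-1 *: v) ^+ 2 = 1.
Proof.
move=> vv0; rewrite formZl formZr mulrA -expr2 exprVn sqr_sqrtr // mulrC exprMn exprVn.
by rewrite real_normK ?num_real // mulfV // expf_neq0.
Qed.

Lemma rank_perp_lt (W : 'M[R]_n) v : (v <= W)%MS -> fm v v != 0 ->
  (\rank (W :&: kermx (G *m v^T)) < \rank W)%N.
Proof.
move=> vW vv0; apply: rank_ltmx; rewrite ltmxE capmxSl /=.
by apply: contraNN vv0 => /(submx_trans vW); rewrite sub_capmx sub_kermx_form => /andP[].
Qed.

Lemma orthonormal_basis_of_exists (W : 'M[R]_n) : exists s, orthonormal_basis_of W s.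
Proof.
move: {2}(\rank W) (leqnn (\rank W)) => k; elim: k W => [|k IH] W rkW.
  exists [::]; apply: orthonormal_basis_of_isotropic => u.
  by move: rkW; rewrite leqn0 mxrank_eq0 => /eqP ->; rewrite submx0 => /eqP ->; rewrite form0l.
have [[v [vW vv0]] | iso] := classic (exists v, (v <= W)%MS /\ fm v v != 0); last first.
  exists [::]; apply: orthonormal_basis_of_isotropic => u uW.
  by apply/eqP/negPn/negP => uu; apply: iso; exists u.
set c := (Num.sqrt `|fm v v|)^-1.
have [|s basis] := IH (W :&: kermx (G *m (c *: v)^T))%MS.
  rewrite -ltnS; apply: leq_trans (rank_perp_lt _ _) rkW; first exact: scalemx_sub.
  by rewrite -sqrf_eq0 form_normalize // oner_eq0.
by exists (c *: v :: s); apply: orthonormal_basis_of_cons; rewrite ?form_normalize ?scalemx_sub.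
Qed.

End SymmetricForm.

Section Frames.
Variables (R : realType) (n : nat) (G : 'M[R]_n).
Local Notation fm := (Defs.form G).

Definition orthonormal_frame (f g : seq 'rV[R]_n) : Prop :=
  [/\ forall i j, (i < size f)%N -> (j < size f)%N -> fm f`_i f`_j = - (i == j)%:R,
      forall i j, (i < size g)%N -> (j < size g)%N -> fm g`_i g`_j = (i == j)%:R,
      forall i j, (i < size f)%N -> (j < size g)%N -> fm f`_i g`_j = 0
    & forall x w, fm x w = - (\sum_(i < size f) fm x f`_i * fm f`_i w)
                           + \sum_(k < size g) fm x g`_k * fm g`_k w].

Lemma frame_of_basis s : orthonormal_basis_of G 1%:M s ->
  orthonormal_frame [seq t <- s | fm t t < 0] [seq t <- s | 0 < fm t t].
Proof.
case=> us sW orth expand.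
set f := [seq t <- s | _]; set g := [seq t <- s | _].
have sign t : t \in s -> fm t t = 1 \/ fm t t = -1.
  by case/sW => _ /eqP; rewrite sqrf_eq1 => /orP[] /eqP; [left | right].
have ff t : t \in f -> fm t t = -1.
  by rewrite mem_filter => /andP[neg /sign[] e //]; rewrite e ltr10 in neg.
have gg t : t \in g -> fm t t = 1.
  by rewrite mem_filter => /andP[pos /sign[] e //]; rewrite e ltr0N1 in pos.
have fs t : t \in f -> t \in s by rewrite mem_filter => /andP[].
have gs t : t \in g -> t \in s by rewrite mem_filter => /andP[].
have orth_nth h i j : {subset h <= s} -> uniq h -> (i < size h)%N -> (j < size h)%N ->
    i != j -> fm h`_i h`_j = 0.
  by move=> hs uh ih jh ij; rewrite orth ?hs ?mem_nth ?nth_uniq.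
split.
- move=> i j ilt jlt; have [<-|ij] := eqVneq i j; first by rewrite ff ?mem_nth.
  by rewrite orth_nth ?filter_uniq ?oppr0.
- move=> i j ilt jlt; have [<-|ij] := eqVneq i j; first by rewrite gg ?mem_nth.
  by rewrite orth_nth ?filter_uniq.
- move=> i j ilt jlt; rewrite orth ?(fs _ (mem_nth 0 ilt)) ?(gs _ (mem_nth 0 jlt)) //.
  apply/eqP => fg_eq; have := ff _ (mem_nth 0 ilt).
  by rewrite fg_eq gg ?mem_nth //; lra.
- move=> x w; rewrite expand ?submx1 // (bigID (fun t => fm t t < 0)) /=.
  rewrite -[X in X + _]big_filter -[X in _ + X]big_filter.
  have -> : [seq t <- s | ~~ (fm t t < 0)] = g.
    apply: eq_in_filter => t /sign[] ->; by rewrite ?ltr10 ?ltr01 ?ltrN10 ?ltr0N1.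
  rewrite [X in X + _](big_nth 0) [X in _ + X](big_nth 0) !big_mkord -sumrN.
  congr (_ + _); apply: eq_bigr => i _.
    by rewrite ff ?mem_nth // mulN1r.
  by rewrite gg ?mem_nth // mul1r.
Qed.
End Frames.

Section FrameProperties.
Variables (R : realType) (n : nat) (G : 'M[R]_n).
Hypothesis Gsym : G^T = G.
Variables f g : seq 'rV[R]_n.
Hypothesis frameG : orthonormal_frame G f g.
Local Notation fm := (Defs.form G).

Lemma form_ff i j : (i < size f)%N -> (j < size f)%N -> fm f`_i f`_j = - (i == j)%:R.
Proof. by case: frameG => ff _ _ _; exact: ff. Qed.

Lemma form_gg i j : (i < size g)%N -> (j < size g)%N -> fm g`_i g`_j = (i == j)%:R.
Proof. by case: frameG => _ gg _ _; exact: gg. Qed.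

Lemma form_fg i j : (i < size f)%N -> (j < size g)%N -> fm f`_i g`_j = 0.
Proof. by case: frameG => _ _ fg _; exact: fg. Qed.

Lemma form_gf i j : (i < size g)%N -> (j < size f)%N -> fm g`_i f`_j = 0.
Proof. by move=> ig jf; rewrite formC // form_fg. Qed.

Lemma form_frame_sq x :
  fm x x = - (\sum_(i < size f) fm x f`_i ^+ 2) + \sum_(k < size g) fm x g`_k ^+ 2.
Proof.
case: frameG => _ _ _ ->.
by congr (- _ + _); apply: eq_bigr => i _; rewrite expr2 (formC Gsym _ x).
Qed.

Lemma frame_opp : orthonormal_frame (- G) g f.
Proof.
case: frameG => ff gg fg expand; split=> [i j ig jg | i j if_ jf | i j ig jf | x w].
- by rewrite form_opp gg.
- by rewrite form_opp ff // opprK.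
- by rewrite form_opp form_gf // oppr0.
- rewrite form_opp expand opprD opprK addrC.
  by congr (- _ + _); apply: eq_bigr => i _; rewrite !form_opp mulrNN.
Qed.

Lemma form_rows_f D (j : 'I_(size f)) : fm (D *m rows_of f) f`_j = - D 0 j.
Proof.
rewrite rows_of_mul form_suml (bigD1 j) //= big1 => [|i ij].
  by rewrite formZl form_ff // eqxx mulrN1 addr0.
by rewrite formZl form_ff // (negbTE ij : (i == j :> nat) = false) oppr0 mulr0.
Qed.

Lemma form_rows_f_g D k : (k < size g)%N -> fm (D *m rows_of f) g`_k = 0.
Proof.
by move=> kg; rewrite rows_of_mul form_suml big1 // => i _; rewrite formZl form_fg ?mulr0.
Qed.

Lemma row_free_rows_f : row_free (rows_of f).
Proof.
rewrite -kermx_eq0 -submx0; apply/rV_subP => D /sub_kermxP Df0; rewrite submx0.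
by apply/eqP/rowP => j; apply/eqP; rewrite mxE -oppr_eq0 -form_rows_f Df0 form0l.
Qed.

Lemma rank_span_f : \rank <<rows_of f>>%MS = size f.
Proof. by rewrite mxrank_gen; apply/eqP; exact: row_free_rows_f. Qed.

Lemma negdef_span_f : negdef_sub G <<rows_of f>>%MS.
Proof.
move=> v; rewrite genmxE => /submxP[D ->] vn0.
rewrite form_frame_sq [X in _ + X]big1 => [|k _]; last by rewrite form_rows_f_g ?expr0n.
rewrite addr0 oppr_lt0 lt_def sumr_ge0 ?andbT => [|i _]; last exact: sqr_ge0.
apply: contraNneq vn0 => /eqP; rewrite psumr_eq0 => [/allP D0|i _]; last exact: sqr_ge0.
suff -> : D = 0 by rewrite mul0mx.
apply/rowP => j; have /implyP := D0 j (mem_index_enum j).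
by rewrite form_rows_f sqrrN sqrf_eq0 mxE => /(_ isT) /eqP.
Qed.

Lemma negdef_rank_le U : negdef_sub G U -> (\rank U <= size f)%N.
Proof.
move=> defU; rewrite -(mxrank_mul_ker U (G *m (rows_of f)^T)).
suff -> : \rank (U :&: kermx (G *m (rows_of f)^T))%MS = 0%N by rewrite addn0 rank_leq_col.
apply/eqP; rewrite mxrank_eq0 -submx0; apply/rV_subP => v.
rewrite sub_capmx submx0 => /andP[vU /sub_kermxP vf0].
have vf i : (i < size f)%N -> fm v f`_i = 0.
  by move=> ilt; rewrite -(form_rows_of _ _ (Ordinal ilt)) vf0 mxE.
apply/negPn/negP => /(defU v vU); rewrite form_frame_sq big1 => [|i _]; last first.
  by rewrite vf ?expr0n.
by rewrite oppr0 add0r ltNge sumr_ge0 // => k _; exact: sqr_ge0.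
Qed.

End FrameProperties.

Lemma frame_inner_product_sig (R : realType) n (G : 'M[R]_n) f g :
  G^T = G -> G \in unitmx -> orthonormal_frame G f g ->
  inner_product_sig G (size f) (size g).
Proof.
move=> Gsym Gu frameG.
have frameN := frame_opp Gsym frameG.
have GNsym : (- G)^T = - G by rewrite linearN /= Gsym.
split=> //; split.
- exists <<rows_of f>>%MS.
  by split; [exact (negdef_span_f Gsym frameG) | exact: rank_span_f frameG].
- by move=> U /(negdef_rank_le Gsym frameG).
- exists <<rows_of g>>%MS.
  by split; [apply/negdef_oppE; exact (negdef_span_f GNsym frameN) | exact: rank_span_f frameN].
- by move=> U /negdef_oppE /(negdef_rank_le GNsym frameN).
Qed.

Lemma inner_product_sig_unique (R : realType) n (G : 'M[R]_n) p q p' q' :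
  inner_product_sig G p q -> inner_product_sig G p' q' -> p = p' /\ q = q'.
Proof.
case=> _ _ [[U [negU rU]] maxN] [[V [posV rV]] maxP].
case=> _ _ [[U' [negU' rU']] maxN'] [[V' [posV' rV']] maxP'].
split; apply/eqP; rewrite eqn_leq.
- by rewrite -{1}rU maxN' //= -rU' maxN.
- by rewrite -{1}rV maxP' //= -rV' maxP.
Qed.

(** * The tensors R_A and the rank of R(pi) *)

Section CurvatureOperator.
Variables (R : realType) (n : nat).
Implicit Types (S : 'M[R]_n) (T : tensor4 R n).

Definition tensor_add T1 T2 : tensor4 R n := fun i j k l => T1 i j k l + T2 i j k l.

Definition act_of_sym S : tensor4 R n := fun i j k l => S j k * S i l - S i k * S j l.

Lemma tevD T1 T2 x y z w : tev (tensor_add T1 T2) x y z w = tev T1 x y z w + tev T2 x y z w.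
Proof.
rewrite /tev -big_split; apply: eq_bigr => i _; rewrite -big_split; apply: eq_bigr => j _.
rewrite -big_split; apply: eq_bigr => k _; rewrite -big_split; apply: eq_bigr => l _.
by rewrite /tensor_add /=; ring.
Qed.

Lemma tevB T1 T2 x y z w :
  tev (fun i j k l => T1 i j k l - T2 i j k l) x y z w = tev T1 x y z w - tev T2 x y z w.
Proof.
rewrite /tev -sumrB; apply: eq_bigr => i _; rewrite -sumrB; apply: eq_bigr => j _.
rewrite -sumrB; apply: eq_bigr => k _; rewrite -sumrB; apply: eq_bigr => l _.
by rewrite /=; ring.
Qed.

Lemma tev_mul_jk_il (A B : 'M[R]_n) x y z w :
  tev (fun i j k l => A j k * B i l) x y z w = Defs.form A y z * Defs.form B x w.
Proof.
rewrite !formE big_distrlr /= exchange_big; apply: eq_bigr => i _; apply: eq_bigr => j _.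
by rewrite big_distrlr /=; apply: eq_bigr => k _; apply: eq_bigr => l _; ring.
Qed.

Lemma tev_mul_ik_jl (A B : 'M[R]_n) x y z w :
  tev (fun i j k l => A i k * B j l) x y z w = Defs.form A x z * Defs.form B y w.
Proof.
rewrite !formE big_distrlr; apply: eq_bigr => i _; apply: eq_bigr => j _.
by rewrite big_distrlr /=; apply: eq_bigr => k _; apply: eq_bigr => l _; ring.
Qed.

Lemma tev_act_of_sym S x y z w : tev (act_of_sym S) x y z w =
  Defs.form S y z * Defs.form S x w - Defs.form S x z * Defs.form S y w.
Proof.
by rewrite (tevB (fun i j k l => S j k * S i l)) tev_mul_jk_il tev_mul_ik_jl.
Qed.

Lemma is_act_add T1 T2 : is_act T1 -> is_act T2 -> is_act (tensor_add T1 T2).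
Proof.
move=> act1 act2 x y z w; rewrite !tevD.
have [sym1 anti1 bian1] := act1 x y z w; have [sym2 anti2 bian2] := act2 x y z w.
split; first by rewrite sym1 sym2.
  by rewrite anti1 anti2 opprD.
lra.
Qed.

Lemma is_act_of_sym S : S^T = S -> is_act (act_of_sym S).
Proof.
move=> Ssym x y z w; rewrite !tev_act_of_sym.
by rewrite !(formC Ssym y x, formC Ssym z y, formC Ssym z x, formC Ssym w x,
             formC Ssym w y, formC Ssym w z); split; ring.
Qed.

End CurvatureOperator.

Section PlaneOperatorRank.
Variables (R : realType) (n : nat).

Lemma row_free_congruence m p (C : 'M[R]_(m, p)) (K : 'M_m) : K \in unitmx ->
  (\rank (C^T *m K *m C) == m) = row_free C.
Proof.
move=> Ku; apply/idP/idP => [/eqP rk | free].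
  rewrite /row_free eqn_leq rank_leq_row -{1}rk.
  by rewrite (leq_trans (mxrankM_maxl _ _)) // (leq_trans (mxrankM_maxl _ _)) ?mxrank_tr.
by rewrite mxrankMfree // mxrankMfree ?row_free_unit // mxrank_tr.
Qed.

Lemma row_free_col_mxP m1 m2 (A : 'M[R]_(m1, n)) (B : 'M[R]_(m2, n)) :
  reflect (forall (u : 'rV_m1) (v : 'rV_m2), u *m A + v *m B = 0 -> u = 0 /\ v = 0)
          (row_free (col_mx A B)).
Proof.
apply: (iffP idP) => [free u v uv0 | inj].
  have := mulmx_free_eq0 (row_mx u v) free; rewrite mul_row_col uv0 eqxx.
  by move=> /esym/eqP; rewrite -row_mx0 => /eq_row_mx.
rewrite -kermx_eq0 -submx0; apply/rV_subP => w /sub_kermxP.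
by rewrite -[w]hsubmxK mul_row_col => /inj[-> ->]; rewrite row_mx0 sub0mx.
Qed.

Definition rot2 : 'M[R]_(1 + 1) := block_mx 0 (- 1%:M) 1%:M 0.

Definition rot4 : 'M[R]_(1 + 1 + (1 + 1)) := block_mx rot2 0 0 rot2.

Lemma rot2_sqr : rot2 *m rot2 = - 1%:M.
Proof.
rewrite mulmx_block !(mulmx0, mul0mx, mulmx1, mulmxN, addr0, add0r).
by rewrite [in RHS](scalar_mx_block 1 1) opp_block_mx !oppr0.
Qed.

Lemma rot4_unit : rot4 \in unitmx.
Proof.
suff /mulmx1_unit[] : rot4 *m (- rot4) = 1%:M by [].
rewrite mulmxN mulmx_block rot2_sqr !(mulmx0, mul0mx, addr0, add0r).
by rewrite [in RHS](scalar_mx_block (1 + 1) (1 + 1)) opp_block_mx !oppr0 opprK.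
Qed.

Lemma rot2_congruence (a b : 'rV[R]_n) :
  (col_mx a b)^T *m rot2 *m col_mx a b = b^T *m a - a^T *m b.
Proof.
rewrite tr_col_mx mul_row_block !(mulmx0, mulmxN, mulmx1, addr0, add0r).
by rewrite mul_row_col mulNmx addrC.
Qed.

Definition curv_span (S1 S2 : 'M[R]_n) (x y : 'rV[R]_n) : 'M[R]_(1 + 1 + (1 + 1), n) :=
  col_mx (col_mx x y *m S1) (col_mx x y *m S2).

Lemma curv_mxE S1 S2 x y :
  \matrix_(k, l) tev (tensor_add (act_of_sym S1) (act_of_sym S2)) x y
                     (delta_mx 0 k) (delta_mx 0 l)
  = (curv_span S1 S2 x y)^T *m rot4 *m curv_span S1 S2 x y.
Proof.
rewrite tr_col_mx mul_row_block !(mulmx0, addr0, add0r) mul_row_col !mul_col_mx.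
rewrite !rot2_congruence; apply/matrixP => k l.
rewrite !mxE tevD !tev_act_of_sym !form_delta !mxE !big_ord1 !mxE.
ring.
Qed.

Lemma rank_plane_op_eq4E (G S1 S2 : 'M[R]_n) e1 e2 : G \in unitmx ->
  (Num.sqrt `|Defs.form G e1 e1 * Defs.form G e2 e2 - Defs.form G e1 e2 ^+ 2|)^-1 != 0 ->
  (\rank (plane_op G (tensor_add (act_of_sym S1) (act_of_sym S2)) e1 e2) == 4)
  = row_free (curv_span S1 S2 e1 e2).
Proof.
move=> Gu c_neq0; rewrite /plane_op /curv_op mxrank_scale_nz // curv_mxE.
by rewrite mxrankMfree ?row_free_unit ?unitmx_inv // row_free_congruence // rot4_unit.
Qed.

Lemma mul_add_eq0P (A B : 'M[R]_n) u w :
  u *m A + w *m B = 0 <-> forall z, Defs.form A u z + Defs.form B w z = 0.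
Proof.
split=> [uw0 z | uw0].
  have := congr1 (fun M => (M *m z^T) 0 0) uw0.
  by rewrite /= mulmxDl mul0mx [X in X = _]mxE [X in _ = X]mxE.
by apply/rowP => j; have := uw0 (delta_mx 0 j); rewrite !form_delta !mxE.
Qed.

Lemma rank_plane_op_eq4 (G S1 S2 : 'M[R]_n) e1 e2 : G \in unitmx ->
  (Num.sqrt `|Defs.form G e1 e1 * Defs.form G e2 e2 - Defs.form G e1 e2 ^+ 2|)^-1 != 0 ->
  (forall u w : 'rV_(1 + 1),
     (forall z, Defs.form S1 (u *m col_mx e1 e2) z + Defs.form S2 (w *m col_mx e1 e2) z = 0) ->
     u = 0 /\ w = 0) ->
  \rank (plane_op G (tensor_add (act_of_sym S1) (act_of_sym S2)) e1 e2) = 4%N.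
Proof.
move=> Gu c_neq0 only_trivial; apply/eqP; rewrite rank_plane_op_eq4E //.
by apply/row_free_col_mxP => u w; rewrite !mulmxA => /mul_add_eq0P; exact: only_trivial.
Qed.

Lemma rank_plane_op_neq4 (G S1 S2 : 'M[R]_n) e1 e2 (u w : 'rV_(1 + 1)) : G \in unitmx ->
  (Num.sqrt `|Defs.form G e1 e1 * Defs.form G e2 e2 - Defs.form G e1 e2 ^+ 2|)^-1 != 0 ->
  (u != 0) || (w != 0) ->
  (forall z, Defs.form S1 (u *m col_mx e1 e2) z + Defs.form S2 (w *m col_mx e1 e2) z = 0) ->
  \rank (plane_op G (tensor_add (act_of_sym S1) (act_of_sym S2)) e1 e2) != 4%N.
Proof.
move=> Gu c_neq0 uw_neq0 /mul_add_eq0P; rewrite -!mulmxA rank_plane_op_eq4E // => uw0.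
by apply: contraTN uw_neq0 => /row_free_col_mxP/(_ u w uw0)[-> ->]; rewrite eqxx.
Qed.

Lemma mul_rV2_col (u : 'rV[R]_(1 + 1)) (e1 e2 : 'rV[R]_n) :
  u *m col_mx e1 e2 = lsubmx u 0 0 *: e1 + rsubmx u 0 0 *: e2.
Proof.
rewrite -{1}[u]hsubmxK mul_row_col {1}[lsubmx u]mx11_scalar {1}[rsubmx u]mx11_scalar.
by rewrite !mul_scalar_mx.
Qed.

Lemma rV2_eq0 (u : 'rV[R]_(1 + 1)) : lsubmx u 0 0 = 0 -> rsubmx u 0 0 = 0 -> u = 0.
Proof.
move=> l0 r0; rewrite -[u]hsubmxK [lsubmx u]mx11_scalar [rsubmx u]mx11_scalar l0 r0.
by rewrite !raddf0 row_mx0.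
Qed.

End PlaneOperatorRank.

(** * Non-degenerate 2-planes *)

Section Planes.
Variables (R : realType) (n : nat) (G : 'M[R]_n).
Hypothesis Gsym : G^T = G.
Local Notation fm := (Defs.form G).

Lemma row_col_mx2 (e1 e2 : 'rV[R]_n) (i : 'I_(1 + 1)) :
  row i (col_mx e1 e2) = if i == 0 :> nat then e1 else e2.
Proof.
by case: i => [[|[|//]] Hi]; apply/rowP => k; rewrite !mxE; case: splitP => // j; rewrite !ord1.
Qed.

Lemma mulmx_trE m p (A : 'M[R]_(m, n)) (B : 'M[R]_(p, n)) i j :
  (A *m G *m B^T) i j = fm (row i A) (row j B).
Proof.
by rewrite /Defs.form -row_mul !mxE; apply: eq_bigr => k _; rewrite !mxE.
Qed.

Lemma gram2E e1 e2 : gram2 G e1 e2 = col_mx e1 e2 *m G *m (col_mx e1 e2)^T.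
Proof. by apply/matrixP => i j; rewrite mulmx_trE !row_col_mx2 mxE. Qed.

Lemma det_gram2 e1 e2 : \det (gram2 G e1 e2) = fm e1 e1 * fm e2 e2 - fm e1 e2 ^+ 2.
Proof.
rewrite (expand_det_row _ ord0) !big_ord_recl big_ord0 /cofactor !det_mx11 !mxE /=.
by rewrite (formC Gsym e2 e1) /bump /= expr0 expr1; ring.
Qed.

Lemma form_gram2 e1 e2 u v :
  Defs.form (gram2 G e1 e2) u v = fm (u *m col_mx e1 e2) (v *m col_mx e1 e2).
Proof. by rewrite gram2E /Defs.form trmx_mul !mulmxA. Qed.

Lemma gram2_sym e1 e2 : (gram2 G e1 e2)^T = gram2 G e1 e2.
Proof. by rewrite gram2E !trmx_mul trmxK Gsym mulmxA. Qed.

Lemma gram2_unit_rank e1 e2 : gram2 G e1 e2 \in unitmx -> \rank (col_mx e1 e2) = 2%N.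
Proof.
move=> gram_unit; apply/eqP; rewrite eqn_leq rank_leq_row -{1}(mxrank_unit gram_unit) gram2E.
by rewrite (leq_trans (mxrankM_maxl _ _)) // mxrankM_maxl.
Qed.

Lemma plane_sig_scale_neq0 a b e1 e2 : plane_sig G a b e1 e2 ->
  (Num.sqrt `|fm e1 e1 * fm e2 e2 - fm e1 e2 ^+ 2|)^-1 != 0.
Proof.
case=> _ [_ gram_unit _ _].
by rewrite invr_eq0 sqrtr_eq0 normr_le0 -det_gram2 -unitfE -unitmxE.
Qed.

Lemma spacelike_posdef e1 e2 : spacelike G e1 e2 ->
  forall u : 'rV_(1 + 1), u != 0 -> 0 < fm (u *m col_mx e1 e2) (u *m col_mx e1 e2).
Proof.
case=> _ [_ _ _ [[U [posU rU]] _]] u u_neq0; rewrite -form_gram2; apply: posU u_neq0.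
by apply: submx_full; rewrite /row_full rU.
Qed.

Lemma timelike_negdef e1 e2 : timelike G e1 e2 ->
  forall u : 'rV_(1 + 1), u != 0 -> fm (u *m col_mx e1 e2) (u *m col_mx e1 e2) < 0.
Proof.
case=> _ [_ _ [[U [negU rU]] _] _] u u_neq0; rewrite -form_gram2; apply: negU u_neq0.
by apply: submx_full; rewrite /row_full rU.
Qed.


Lemma delta_mx_ii (i : 'I_2) : (delta_mx 0 i : 'rV[R]_2) 0 i = 1.
Proof. by rewrite mxE !eqxx. Qed.

Section OrthonormalPair.
Variables e1 e2 : 'rV[R]_n.
Hypotheses (e12 : fm e1 e2 = 0) (e11 : fm e1 e1 ^+ 2 = 1) (e22 : fm e2 e2 ^+ 2 = 1).
Local Notation gram := (gram2 G e1 e2).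

Lemma gram2_offdiag i j : i != j -> gram i j = 0.
Proof. by case: i j => [[|[|//]] ?] [[|[|//]] ?] //= _; rewrite mxE /= ?(formC Gsym e2 e1). Qed.

Lemma gram2_diag_sqr i : gram i i ^+ 2 = 1.
Proof. by case: i => [[|[|//]] ?]; rewrite mxE. Qed.

Lemma form_gram2_delta x i : Defs.form gram x (delta_mx 0 i) = x 0 i * gram i i.
Proof.
rewrite form_delta mxE (bigD1 i) //= big1 ?addr0 // => k ki.
by rewrite gram2_offdiag ?mulr0.
Qed.

Lemma gram2_unit : gram \in unitmx.
Proof.
suff /mulmx1_unit[] : gram *m gram = 1%:M by [].
apply/matrixP => i j; rewrite [LHS]mxE [RHS]mxE (bigD1 i) //= big1 ?addr0 => [|k ki].
  case: eqVneq => [<-|ij]; first by rewrite -expr2 gram2_diag_sqr.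
  by rewrite (gram2_offdiag ij) mulr0.
by rewrite (gram2_offdiag (i := i) (j := k)) ?mul0r // eq_sym.
Qed.

Lemma gram2_basis :
  orthonormal_basis_of gram 1%:M [:: delta_mx 0 ord0; delta_mx 0 (lift ord0 ord0)].
Proof.
have form_dd i : Defs.form gram (delta_mx 0 i) (delta_mx 0 i) = gram i i.
  by rewrite form_gram2_delta delta_mx_ii mul1r.
split.
- rewrite /= inE andbT; apply/eqP => /rowP/(_ ord0).
  by rewrite delta_mx_ii mxE /= => /eqP; rewrite oner_eq0.
- by move=> t; rewrite !inE => /orP[] /eqP ->; rewrite submx1 form_dd gram2_diag_sqr.
- move=> x y; rewrite !inE => /orP[] /eqP -> /orP[] /eqP -> //; rewrite ?eqxx //;
    by rewrite form_gram2_delta mxE /= mul0r.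
- have cube (a b c : R) : c ^+ 2 = 1 -> a * (b * c) = c * (a * c * (b * c)).
    by move=> c2; rewrite -[LHS]mulr1 -c2; ring.
  move=> x w _ _; rewrite big_cons big_seq1 {1}(row_sum_delta x) form_suml.
  rewrite big_ord_recl big_ord1; congr (_ + _); rewrite formZl form_dd;
    by rewrite (formC (gram2_sym _ _) _ w) !form_gram2_delta; apply/cube/gram2_diag_sqr.
Qed.

Lemma orthonormal_plane_sig :
  plane_sig G ((fm e1 e1 < 0)%R + (fm e2 e2 < 0)%R) ((0 < fm e1 e1)%R + (0 < fm e2 e2)%R)
            e1 e2.
Proof.
split; first exact: gram2_unit_rank gram2_unit.
have := frame_inner_product_sig (gram2_sym _ _) gram2_unit (frame_of_basis gram2_basis).
rewrite !size_filter /= !form_gram2_delta (delta_mx_ii ord0) (delta_mx_ii (lift ord0 ord0)).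
by rewrite !mul1r !mxE /= !addn0.
Qed.

End OrthonormalPair.

Lemma form_plane_perp (u : 'rV[R]_(1 + 1)) e1 e2 z : fm e1 z = 0 -> fm e2 z = 0 ->
  fm (u *m col_mx e1 e2) z = 0.
Proof. by move=> e1z e2z; rewrite mul_rV2_col formDl !formZl e1z e2z !mulr0 addr0. Qed.

Lemma mixed_orthonormal e1 e2 : fm e1 e1 = -1 -> fm e2 e2 = 1 -> fm e1 e2 = 0 ->
  mixed G e1 e2.
Proof.
move=> e11 e22 e12; have := @orthonormal_plane_sig e1 e2 e12.
by rewrite e11 e22 sqrrN expr1n ltrN10 ltr10 ltr0N1 ltr01; apply.
Qed.

Lemma timelike_orthonormal e1 e2 : fm e1 e1 = -1 -> fm e2 e2 = -1 -> fm e1 e2 = 0 ->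
  timelike G e1 e2.
Proof.
move=> e11 e22 e12; have := @orthonormal_plane_sig e1 e2 e12.
by rewrite e11 e22 sqrrN expr1n ltrN10 ltr0N1; apply.
Qed.

End Planes.

Section PairingForm.
Variables (R : realType) (n : nat) (G : 'M[R]_n).
Hypothesis Gsym : G^T = G.
Variables f g : seq 'rV[R]_n.
Hypothesis frameG : orthonormal_frame G f g.
Hypothesis g_le_f : (size g <= size f)%N.
Local Notation fm := (Defs.form G).

Definition pairing_form : 'M[R]_n :=
  \sum_(k < size g) (G *m (g`_k)^T *m f`_k *m G + G *m (f`_k)^T *m g`_k *m G).
Local Notation S := pairing_form.

Lemma form_pairing x z :
  Defs.form S x z = \sum_(k < size g) (fm x g`_k * fm f`_k z + fm x f`_k * fm g`_k z).
Proof.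
rewrite /Defs.form /S mulmx_sumr mulmx_suml summxE; apply: eq_bigr => k _.
by rewrite mulmxDr mulmxDl mxE -!/(Defs.form _ _ _) !form_outer.
Qed.

Lemma pairing_form_sym : S^T = S.
Proof.
rewrite /S raddf_sum; apply: eq_bigr => k _.
by rewrite raddfD /= !trmx_mul !trmxK Gsym !mulmxA addrC.
Qed.

Lemma form_pairing_fr v i : (i < size f)%N ->
  Defs.form S v f`_i = if (i < size g)%N then - fm v g`_i else 0.
Proof.
move=> if_; rewrite form_pairing.
under eq_bigr => k _ do
  rewrite (form_ff frameG) ?(leq_trans (ltn_ord k)) // (form_gf Gsym frameG) //
     mulr0 addr0 mulrN.
case: ifPn => [ig | ig].
  rewrite (bigD1 (Ordinal ig)) //= eqxx mulr1 big1 ?addr0 // => k.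
  by rewrite -val_eqE /= => /negbTE ->; rewrite mulr0 oppr0.
rewrite big1 // => k _; case: eqP => [ki | _]; last by rewrite mulr0 oppr0.
by rewrite -ki ltn_ord in ig.
Qed.

Lemma form_pairing_gr v k : (k < size g)%N -> Defs.form S v g`_k = fm v f`_k.
Proof.
move=> kg; rewrite form_pairing.
under eq_bigr => j _ do
  rewrite (form_gg frameG) // (form_fg frameG) ?(leq_trans (ltn_ord j)) // mulr0 add0r.
rewrite (bigD1 (Ordinal kg)) //= eqxx mulr1 big1 ?addr0 // => j.
by rewrite -val_eqE /= => /negbTE ->; rewrite mulr0.
Qed.

Lemma form_pairing_fl i z : (i < size f)%N ->
  Defs.form S f`_i z = if (i < size g)%N then - fm g`_i z else 0.
Proof.
move=> if_; rewrite (formC pairing_form_sym) form_pairing_fr //.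
by case: ifP => // _; rewrite formC.
Qed.

Lemma form_pairing_gl k z : (k < size g)%N -> Defs.form S g`_k z = fm f`_k z.
Proof. by move=> kg; rewrite (formC pairing_form_sym) form_pairing_gr // formC. Qed.

Lemma pairing_relation_normE u w : (forall z, fm u z + Defs.form S w z = 0) ->
  fm u u + fm w w = - \sum_(i < size f | (size g <= i)%N) fm w f`_i ^+ 2.
Proof.
move=> uw0; have uE z : fm u z = - Defs.form S w z by apply/eqP; rewrite -addr_eq0 uw0.
rewrite !(form_frame_sq Gsym frameG).
have uf : \sum_(i < size f) fm u f`_i ^+ 2 = \sum_(k < size g) fm w g`_k ^+ 2.
  rewrite (big_ord_widen _ (fun k => fm w g`_k ^+ 2) g_le_f) [RHS]big_mkcond /=.
  by apply: eq_bigr => i _; rewrite uE form_pairing_fr //; case: ifP; rewrite ?sqrrN ?oppr0 ?expr0n.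
have ug : \sum_(k < size g) fm u g`_k ^+ 2 = \sum_(k < size g) fm w f`_k ^+ 2.
  by apply: eq_bigr => k _; rewrite uE form_pairing_gr // sqrrN.
rewrite uf ug (big_ord_widen _ (fun k => fm w f`_k ^+ 2) g_le_f).
rewrite [\sum_(i < size f) _](bigID (fun i : 'I_(size f) => (i < size g)%N)) /=.
under [in RHS]eq_bigl => i do rewrite leqNgt.
ring.
Qed.
End PairingForm.

Section ExampleTensor.
Variables (R : realType) (n : nat) (G : 'M[R]_n).
Hypotheses (Gsym : G^T = G) (Gu : G \in unitmx).
Variables f g : seq 'rV[R]_n.
Hypotheses (frameG : orthonormal_frame G f g) (g_le_f : (size g <= size f)%N).
Local Notation fm := (Defs.form G).
Local Notation S := (pairing_form G f g).

Definition example_tensor : tensor4 R n := tensor_add (act_of_sym G) (act_of_sym S).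
Local Notation T := example_tensor.

Lemma is_act_example : is_act T.
Proof. exact: is_act_add (is_act_of_sym Gsym) (is_act_of_sym (pairing_form_sym Gsym f g)). Qed.

Lemma spacelike_rank4 e1 e2 : spacelike G e1 e2 -> \rank (plane_op G T e1 e2) = 4%N.
Proof.
move=> sp; apply: rank_plane_op_eq4 => //; first exact: plane_sig_scale_neq0 sp.
move=> u w /(pairing_relation_normE Gsym frameG g_le_f) core.
have pos := spacelike_posdef sp.
have ge0 v : 0 <= fm (v *m col_mx e1 e2) (v *m col_mx e1 e2).
  by have [->|/pos/ltW //] := eqVneq v 0; rewrite mul0mx form0l.
have eq0 v : fm (v *m col_mx e1 e2) (v *m col_mx e1 e2) = 0 -> v = 0.
  by move=> v0; apply/eqP/negPn/negP => /pos; rewrite v0 ltxx.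
have tail_ge0 : 0 <= \sum_(i < size f | (size g <= i)%N) fm (w *m col_mx e1 e2) f`_i ^+ 2.
  by apply: sumr_ge0 => i _; exact: sqr_ge0.
by have := ge0 u; have := ge0 w; split; apply: eq0; lra.
Qed.

Lemma timelike_rank4 e1 e2 : timelike G e1 e2 ->
  (forall i, (size g <= i < size f)%N -> fm e1 f`_i = 0 /\ fm e2 f`_i = 0) ->
  \rank (plane_op G T e1 e2) = 4%N.
Proof.
move=> tl perp; apply: rank_plane_op_eq4 => //; first exact: plane_sig_scale_neq0 tl.
move=> u w /(pairing_relation_normE Gsym frameG g_le_f).
rewrite big1 ?oppr0 => [core|i gi]; last first.
  have /perp[e1i e2i] : (size g <= i < size f)%N by rewrite gi ltn_ord.
  by rewrite form_plane_perp ?expr0n.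
have neg := timelike_negdef tl.
have le0 v : fm (v *m col_mx e1 e2) (v *m col_mx e1 e2) <= 0.
  by have [->|/neg/ltW //] := eqVneq v 0; rewrite mul0mx form0l.
have eq0 v : fm (v *m col_mx e1 e2) (v *m col_mx e1 e2) = 0 -> v = 0.
  by move=> v0; apply/eqP/negPn/negP => /neg; rewrite v0 ltxx.
by have := le0 u; have := le0 w; split; apply: eq0; lra.
Qed.

Hypothesis g2 : (1 < size g)%N.

Let g0 : (0 < size g)%N. Proof. exact: ltnW. Qed.
Let f0 : (0 < size f)%N. Proof. exact: leq_trans g0 g_le_f. Qed.
Let f1 : (1 < size f)%N. Proof. exact: leq_trans g2 g_le_f. Qed.

Lemma mixed_f0_g1 : mixed G f`_0 g`_1.
Proof.
apply: (mixed_orthonormal Gsym);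
  by rewrite ?(form_ff frameG) ?(form_gg frameG) ?(form_fg frameG).
Qed.

Lemma rank_f0_g1 : \rank (plane_op G T f`_0 g`_1) = 4%N.
Proof.
apply: rank_plane_op_eq4 => //; first exact: plane_sig_scale_neq0 mixed_f0_g1.
(* Pairing the relation with f_0, g_1, g_0 and f_1 isolates the four coefficients. *)
move=> u w uw0; have := uw0 f`_0; have := uw0 g`_1; have := uw0 g`_0; have := uw0 f`_1.
rewrite !mul_rV2_col !(formDl, formZl) !form_pairing_fl ?g0 // !form_pairing_gl //.
rewrite !(formNl, form_ff frameG, form_gg frameG, form_fg frameG, form_gf Gsym frameG) //=.
by move=> *; split; apply: rV2_eq0; lra.
Qed.

Lemma mixed_f0_g0 : mixed G f`_0 g`_0.
Proof.
apply: (mixed_orthonormal Gsym);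
  by rewrite ?(form_ff frameG) ?(form_gg frameG) ?(form_fg frameG) ?eqxx.
Qed.

Lemma rank_f0_g0_neq4 : \rank (plane_op G T f`_0 g`_0) != 4%N.
Proof.
apply: (rank_plane_op_neq4 (u := row_mx 0 1) (w := row_mx 1 0)) => //.
- exact: plane_sig_scale_neq0 mixed_f0_g0.
- by rewrite row_mx_eq0 eqxx oner_eq0.
- move=> z; rewrite !mul_row_col !mul0mx !mul1mx add0r addr0 form_pairing_fl ?g0 //.
  by rewrite addrN.
Qed.

Lemma timelike_f0_f1 : timelike G f`_0 f`_1.
Proof. by apply: (timelike_orthonormal Gsym); rewrite (form_ff frameG) // ?oppr0. Qed.

Lemma rank_f0_f1 : \rank (plane_op G T f`_0 f`_1) = 4%N.
Proof.
apply: timelike_rank4 timelike_f0_f1 _ => i /andP[gi if_].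
have i_gt1 : (1 < i)%N := leq_trans g2 gi.
by rewrite !(form_ff frameG) // !ltn_eqF // ?(ltnW i_gt1) // mulr0n oppr0.
Qed.

Section ExcessTimelike.
Hypothesis g_lt_f : (size g < size f)%N.

Lemma timelike_last_f0 : timelike G f`_(size g) f`_0.
Proof.
apply: (timelike_orthonormal Gsym);
  by rewrite (form_ff frameG) // ?eqxx ?gtn_eqF // ?mulr0n ?oppr0.
Qed.

Lemma mixed_last_g0 : mixed G f`_(size g) g`_0.
Proof.
apply: (mixed_orthonormal Gsym);
  by rewrite ?(form_ff frameG) ?(form_gg frameG) ?(form_fg frameG) ?eqxx.
Qed.

Lemma rank_last_f_neq4 e2 a b : plane_sig G a b f`_(size g) e2 ->
  \rank (plane_op G T f`_(size g) e2) != 4%N.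
Proof.
move=> sig; apply: (rank_plane_op_neq4 (u := 0) (w := row_mx 1 0)) => //.
- exact: plane_sig_scale_neq0 sig.
- by rewrite row_mx_eq0 oner_eq0 orbT.
- move=> z; rewrite mul0mx form0l add0r mul_row_col mul1mx mul0mx addr0.
  by rewrite form_pairing_fl // ltnn.
Qed.

End ExcessTimelike.

End ExampleTensor.

Theorem lemma2p3 (R : realType) (n p q : nat) (G : 'M[R]_n) :
  inner_product_sig G p q -> (2 <= q)%N -> (q <= p)%N ->
  ((p = q ->
     exists T : tensor4 R n, [/\ is_act T, spacelike_rank G T 4,
                                 timelike_rank G T 4 & ~ const_mixed_rank G T]) /\
   ((q < p)%N ->
     exists T : tensor4 R n, [/\ is_act T, spacelike_rank G T 4,
                                 ~ const_timelike_rank G T & ~ mixed_rank G T 4])).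
Proof.
move=> sig q2 qp; have [Gsym Gu _ _] := sig.
have [s basis] := orthonormal_basis_of_exists Gsym 1%:M.
pose f := [seq t <- s | Defs.form G t t < 0]; pose g := [seq t <- s | 0 < Defs.form G t t].
have frameG : orthonormal_frame G f g := frame_of_basis basis.
have [ep eq] := inner_product_sig_unique sig (frame_inner_product_sig Gsym Gu frameG).
subst p q; pose T := example_tensor G f g.
have act : is_act T := is_act_example Gsym f g.
have space : spacelike_rank G T 4 := spacelike_rank4 Gsym Gu frameG qp.
split=> [fg | gf]; exists T; split=> //.
- move=> e1 e2 tl; apply: (timelike_rank4 Gsym Gu frameG qp tl) => i.
  by rewrite fg => /andP[gi]; rewrite ltnNge gi.
- case=> r mixed_r; move: (rank_f0_g0_neq4 Gsym Gu frameG qp q2).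
  rewrite (mixed_r _ _ (mixed_f0_g0 Gsym frameG qp q2)).
  by rewrite -(mixed_r _ _ (mixed_f0_g1 Gsym frameG qp q2)) rank_f0_g1.
- have tl_last := timelike_last_f0 Gsym frameG qp q2 gf.
  case=> r time_r; move: (rank_last_f_neq4 Gsym Gu frameG qp gf tl_last).
  rewrite (time_r _ _ tl_last) -(time_r _ _ (timelike_f0_f1 Gsym frameG qp q2)).
  by rewrite rank_f0_f1.
- have mx_last := mixed_last_g0 Gsym frameG q2 gf.
  by move=> mixed4; move: (rank_last_f_neq4 Gsym Gu frameG qp gf mx_last); rewrite mixed4.
Qed.
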